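(* Let $(x^k)$ be generated by the variational-equilibrium augmented Lagrangian method described below, where each step satisfies the inexactness assumption described below, let $\bar x$ be a limit point of $(x^k)$, and assume that $h$ satisfies (classical) CPLD in $\bar x$. Then $\bar x$ is a global solution of $$\min_{x\in\mathbb{R}^n}\ \|g_+(x)\|^2\quad\text{s.t.}\quad h(x)\le0.$$ In particular, if there are feasible points (points $x$ with $g(x)\le 0$ and $h(x)\le0$), then $\bar x$ is feasible.
   Context: GNEP with shared constraints: $N$ players, $x=(x^1,\ldots,x^N)\in\mathbb{R}^n$, $x^\nu\in\mathbb{R}^{n_\nu}$; player $\nu$ solves $\min_{x^\nu}\theta_\nu(x)$ s.t. $g(x)\le0$, $h(x)\le0$, where $\theta_\nu:\mathbb{R}^n\to\mathbb{R}$, $g:\mathbb{R}^n\to\mathbb{R}^m$, $h:\mathbb{R}^n\to\mathbb{R}^p$ are continuously differentiable and all components of $g$ and $h$ are convex. Notation: $v_+=\max\{0,v\}$ componentwise; $\nabla f$ = transposed Jacobian, $\nabla_{x^\nu}f$ its rows for $x^\nu$; $\min$ componentwise; Euclidean norms. Augmented Lagrangian of player $\nu$: $L_a^\nu(x,u;\rho)=\theta_\nu(x)+\frac{\rho}{2}\|(g(x)+u/\rho)_+\|^2$. Method: choose $u^{\max}\ge0$, $\tau\in(0,1)$, $\gamma>1$, $\rho_0>0$, $x^0\in\mathbb{R}^n$, $\lambda^0\in\mathbb{R}^m$, $\mu^0\in\mathbb{R}^p$, $u^0\in[0,u^{\max}]^m$. For $k=0,1,2,\dots$ (assumed to run forever):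 (1) compute $(x^{k+1},\mu^{k+1})\in\mathbb{R}^{n+p}$ satisfying the inexactness assumption; (2) $\lambda^{k+1}=(u^k+\rho_kg(x^{k+1}))_+$; (3) if $\|\min\{-g(x^{k+1}),\lambda^{k+1}\}\|\le\tau\|\min\{-g(x^k),\lambda^k\}\|$ set $\rho_{k+1}=\rho_k$, else $\rho_{k+1}=\gamma\rho_k$; (4) $u^{k+1}=\min\{\lambda^{k+1},u^{\max}\}$ componentwise. Inexactness assumption: for all $k$ and every $\nu$, $\|\nabla_{x^\nu}L_a^\nu(x^{k+1},u^k;\rho_k)+\nabla_{x^\nu}h(x^{k+1})\mu^{k+1}\|\le\varepsilon_k$ and $\|\min\{-h(x^{k+1}),\mu^{k+1}\}\|\le\varepsilon'_k$, with $(\varepsilon_k)\subset[0,\infty)$ bounded and $(\varepsilon'_k)\subset[0,\infty)$, $\varepsilon'_k\to0$. Classical CPLD for $h$ at $x$ with $h(x)\le0$: whenever $\nabla h_j(x)$, $j\in J$, are positively linearly dependent (a nontrivial nonnegative combination vanishes) for some $J\subset\{j:h_j(x)=0\}$, the gradients $\nabla h_j(y)$, $j\in J$, are linearly dependent for all $y$ in a neighbourhood of $x$. *)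

From HB Require Import structures.
From mathcomp Require Import all_boot all_order all_algebra.
From mathcomp Require Import all_classical all_reals all_analysis.
Set Implicit Arguments. Unset Strict Implicit. Unset Printing Implicit Defensive.
Import Order.TTheory GRing.Theory Num.Theory.
Import numFieldNormedType.Exports.
Local Open Scope ring_scope.
Local Open Scope classical_set_scope.

Section GNEPDefs.
Variable R : realType.

Definition pd (n : nat) (f : 'rV[R]_n -> R) (x : 'rV[R]_n) (i : 'I_n) : R :=
  'D_(delta_mx ord0 i) f x.

Definition C1 (n : nat) (f : 'rV[R]_n -> R) : Prop :=
  (forall x, differentiable f x) /\ (forall i, continuous (fun x => pd f x i)).

Definition convex_fun (n : nat) (f : 'rV[R]_n -> R) : Prop :=
  forall (x y : 'rV[R]_n) (t : R), 0 <= t <= 1 ->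
    f (t *: x + (1 - t) *: y) <= t * f x + (1 - t) * f y.

Definition bnorm (I : finType) (P : pred I) (v : I -> R) : R :=
  Num.sqrt (\sum_(i | P i) v i ^+ 2).

Definition enorm (I : finType) (v : I -> R) : R := bnorm predT v.

Definition pos (a : R) : R := Num.max 0 a.

Definition La (n m : nat) (theta : 'rV[R]_n -> R) (g : 'I_m -> 'rV[R]_n -> R)
  (u : 'I_m -> R) (rho : R) (x : 'rV[R]_n) : R :=
  theta x + rho / 2 * (enorm (fun j => pos (g j x + u j / rho))) ^+ 2.

Definition CPLD (n p : nat) (h : 'I_p -> 'rV[R]_n -> R) (x : 'rV[R]_n) : Prop :=
  forall J : {set 'I_p},
    (forall j, j \in J -> h j x = 0) ->
    (exists alpha : 'I_p -> R,
        (forall j, j \in J -> 0 <= alpha j) /\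
        (exists2 j, j \in J & alpha j != 0) /\
        (forall i, \sum_(j in J) alpha j * pd (h j) x i = 0)) ->
    \forall y \near x, exists beta : 'I_p -> R,
        (exists2 j, j \in J & beta j != 0) /\
        (forall i, \sum_(j in J) beta j * pd (h j) y i = 0).

End GNEPDefs.

(* If the penalty parameters rho_k eventually stay constant, the test of step (3)
   succeeds from then on, the complementarity residual of g decays geometrically
   and the limit point is feasible for g. Otherwise rho_k -> oo; dividing the
   inexact stationarity condition by rho_k shows that the combinations
   sum_j (mu_j^{k+1} / rho_k) grad h_j(x^{k+1}) tend to -sum_j g_j(xbar)_+ grad g_j(xbar),
   while the multipliers of inactive constraints vanish. Caratheodory's theorem
   reduces these combinations to linearly independent active gradients, and CPLD
   keeps the reduced multipliers bounded, so xbar is a KKT point of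
   min ||g_+||^2 / 2 s.t. h <= 0, hence a global minimizer by convexity.
   All limits are taken along an ultrafilter refining the subsequence that
   converges to xbar: bounded sequences converge along it, so no further
   subsequences need to be extracted. *)

From HB Require Import structures.
From mathcomp Require Import all_boot all_order all_algebra.
From mathcomp Require Import all_classical all_reals all_analysis.
From mathcomp Require Import ring lra zify.
Set Implicit Arguments. Unset Strict Implicit. Unset Printing Implicit Defensive.
Import Order.TTheory GRing.Theory Num.Theory.
Import numFieldNormedType.Exports.
Local Open Scope ring_scope.
Local Open Scope classical_set_scope.

Section PositivePart.
Variable R : realType.
Implicit Types a b : R.

Lemma ger0_pos a : 0 <= a -> pos a = a.
Proof. by move=> a0; rewrite /pos max_r. Qed.

Lemma ler0_pos a : a <= 0 -> pos a = 0.
Proof. by move=> a0; rewrite /pos max_l. Qed.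

Lemma pos_ge0 a : 0 <= pos a.
Proof. by rewrite /pos le_max lexx. Qed.

Lemma ler_pos a : a <= pos a.
Proof. by rewrite /pos le_max lexx orbT. Qed.

Lemma pos_sqrE a : pos a ^+ 2 = pos a * a.
Proof.
have [a0|a0] := leP 0 a; first by rewrite ger0_pos.
by rewrite ler0_pos ?mul0r ?expr0n // ltW.
Qed.

Lemma pos_lipschitz a b : `|pos a - pos b| <= `|a - b|.
Proof.
have := ler_norm (a - b); have := ler_norm (b - a); rewrite distrC ler_norml.
have [a0|a0] := leP 0 a; have [b0|b0] := leP 0 b;
  rewrite ?(ger0_pos a0) ?(ger0_pos b0) ?(ler0_pos (ltW a0)) ?(ler0_pos (ltW b0));
  move=> *; apply/andP; split; lra.
Qed.

Lemma pos_sqr_taylor a b :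
  0 <= pos b ^+ 2 - pos a ^+ 2 - 2 * pos a * (b - a) <= (b - a) ^+ 2.
Proof.
have sq := sqr_ge0 (b - a).
have [a0|a0] := leP 0 a; have [b0|b0] := leP 0 b;
  rewrite ?(ger0_pos a0) ?(ger0_pos b0) ?(ler0_pos (ltW a0)) ?(ler0_pos (ltW b0)).
- by apply/andP; split; nra.
- have ab : 0 <= a * - b by apply: mulr_ge0; lra.
  by apply/andP; split; nra.
- by apply/andP; split; nra.
- by apply/andP; split; nra.
Qed.

Lemma is_derive_pos_sqr a : is_derive a 1 (fun b => pos b ^+ 2) (2 * pos a).
Proof.
have quot : (fun t : R => t^-1 *: (pos (t *: 1 + a) ^+ 2 - pos a ^+ 2))
    @ 0^' --> 2 * pos a.
  apply/cvgrPdist_le => e e0; near=> t.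
  have t0 : t != 0 by near: t; exact: nbhs_dnbhs_neq.
  have te : `|t| <= e by near: t; exact: (nbhs_dnbhs (nbhs0_le e0)).
  rewrite /= [t *: 1]mulr1.
  have /andP[lo hi] := pos_sqr_taylor a (t + a); rewrite addrK in lo hi.
  have -> : 2 * pos a - t^-1 * (pos (t + a) ^+ 2 - pos a ^+ 2) =
      - t^-1 * (pos (t + a) ^+ 2 - pos a ^+ 2 - 2 * pos a * t) by field.
  rewrite normrM normrN normrV ?unitfE // (ger0_norm lo) ler_pdivrMl ?normr_gt0 //.
  apply: le_trans hi _.
  by rewrite -[t ^+ 2]ger0_norm ?sqr_ge0 // normrX expr2 ler_pM.
split; [apply/cvg_ex; exists (2 * pos a) | apply: cvg_lim] => //; exact: quot.
Unshelve. all: by end_near.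
Qed.

Lemma cvg_pos T (F : set_system T) {FF : Filter F} (f : T -> R) l :
  f @ F --> l -> pos (f t) @[t --> F] --> pos l.
Proof.
move=> /cvgrPdist_le fl; apply/cvgrPdist_le => e /fl.
by apply: filterS => t; apply: le_trans (pos_lipschitz _ _).
Qed.

End PositivePart.

Section PartialDerivatives.
Variables (R : realType) (n : nat).
Implicit Types (f G : 'rV[R]_n -> R) (x y : 'rV[R]_n).

Lemma differentiable_addr G c x : differentiable G x ->
  differentiable (fun y => G y + c) x.
Proof.
by move=> dG; have -> : (fun y => G y + c) = G + cst c by []; exact: differentiableD.
Qed.

Lemma pd_addr G c x i : differentiable G x -> pd (fun y => G y + c) x i = pd G x i.
Proof.
move=> dG; have -> : (fun y => G y + c) = G + cst c by [].
by rewrite /pd deriveD ?derive_cst ?addr0 //; exact: diff_derivable.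
Qed.

Lemma differentiable_pos_sqr_at (a : R) : differentiable (fun b : R => pos b ^+ 2) a.
Proof. by apply/derivable1_diffP; have [] := is_derive_pos_sqr a. Qed.

Lemma differentiable_pos_sqr G x : differentiable G x ->
  differentiable (fun y => pos (G y) ^+ 2) x.
Proof.
by move=> dG; exact: (differentiable_comp dG (differentiable_pos_sqr_at (G x))).
Qed.

Lemma pd_pos_sqr G x i : differentiable G x ->
  pd (fun y => pos (G y) ^+ 2) x i = 2 * pos (G x) * pd G x i.
Proof.
move=> dG; have dq := differentiable_pos_sqr_at (G x).
rewrite /pd (deriveE _ (differentiable_pos_sqr dG)) (diff_comp dG dq) /=.
have [_ Dq] := is_derive_pos_sqr (G x).
rewrite diff1E // derive1E Dq -deriveE //; exact: mulrC.
Qed.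

Lemma pd_La m theta (g : 'I_m -> 'rV[R]_n -> R) (u : 'I_m -> R) (rho : R) x i :
  differentiable theta x -> (forall j, differentiable (g j) x) ->
  pd (La theta g u rho) x i =
  pd theta x i + rho * \sum_j pos (g j x + u j / rho) * pd (g j) x i.
Proof.
move=> dth dg.
set q := fun j y => pos (g j y + u j / rho) ^+ 2.
have dq j : differentiable (q j) x.
  by apply: differentiable_pos_sqr; exact: differentiable_addr.
have -> : La theta g u rho = theta + (rho / 2) \*: \sum_j q j.
  apply/funext => y; rewrite /La /enorm /bnorm sqr_sqrtr ?fct_sumE //.
  by apply: sumr_ge0 => j _; exact: sqr_ge0.
rewrite /pd deriveD; first last.
- exact/diff_derivable/differentiableZ/differentiable_sum.
- exact: diff_derivable.
rewrite deriveZ; last by apply: derivable_sum => j; exact: diff_derivable.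
rewrite derive_sum; last by move=> j; exact: diff_derivable.
congr (_ + _); rewrite [LHS]/GRing.scale /= !mulr_sumr; apply: eq_bigr => j _.
rewrite [X in _ * X](pd_pos_sqr i (differentiable_addr _ (dg j))).
rewrite (pd_addr _ i (dg j)) /pd.
have [->|r0] := eqVneq rho 0; first by rewrite !mul0r.
by field.
Qed.

Lemma derive_rowE f x (d : 'rV[R]_n) : differentiable f x ->
  'D_d f x = \sum_i d 0 i * pd f x i.
Proof.
move=> df; rewrite /pd deriveE // {1}(row_sum_delta d) linear_sum.
by apply: eq_bigr => i _; rewrite linearZ /= deriveE.
Qed.

(* The difference quotients of a convex function along [y - x] on ]0, 1] are
   bounded by [f y - f x], hence so is their limit, the directional derivative. *)
Lemma convex_gradient_le f x y : convex_fun f -> differentiable f x ->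
  \sum_i (y 0 i - x 0 i) * pd f x i <= f y - f x.
Proof.
move=> cf df; set d := y - x.
have -> : \sum_i (y 0 i - x 0 i) * pd f x i = 'D_d f x.
  by rewrite derive_rowE //; apply: eq_bigr => i _; rewrite !mxE.
have quot : (fun t : R => t^-1 *: (f (t *: d + x) - f x)) @ 0^'+ --> 'D_d f x.
  exact/cvg_dnbhs_at_right/diff_derivable.
apply: (closed_cvg [set z | z <= f y - f x] (@closed_le _ _) _ _ quot).
near=> t.
have t0 : 0 < t by near: t; exact: nbhs_right_gt.
have t1 : t <= 1 by near: t; exact: nbhs_right_le.
have -> : t *: d + x = t *: y + (1 - t) *: x.
  by rewrite /d scalerBr scalerBl scale1r addrA addrAC.
have := cf y x t; rewrite (ltW t0) t1 => /(_ isT) conv.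
rewrite /GRing.scale /= ler_pdivrMl //; lra.
Unshelve. all: by end_near.
Qed.

End PartialDerivatives.

Section Norms.
Variables (R : realType) (I : finType).
Implicit Types v : I -> R.

Lemma bnorm_ge_norm (P : pred I) v i : P i -> `|v i| <= bnorm P v.
Proof.
move=> Pi; rewrite /bnorm -sqrtr_sqr ler_sqrt; last first.
  by apply: sumr_ge0 => j _; exact: sqr_ge0.
by rewrite (bigD1 i) //= lerDl; apply: sumr_ge0 => j _; exact: sqr_ge0.
Qed.

Lemma enorm_ge_norm v i : `|v i| <= enorm v.
Proof. exact: bnorm_ge_norm. Qed.

Lemma enorm_ge0 v : 0 <= enorm v.
Proof. exact: sqrtr_ge0. Qed.

Lemma enorm_sqr v : enorm v ^+ 2 = \sum_i v i ^+ 2.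
Proof. by rewrite sqr_sqrtr //; apply: sumr_ge0 => i _; exact: sqr_ge0. Qed.

Lemma enorm_sqr_le0 v : enorm v ^+ 2 <= 0 -> forall i, v i = 0.
Proof.
rewrite enorm_sqr => v0 i; apply/eqP; rewrite -sqrf_eq0; apply/eqP.
move: i isT; apply: psumr_eq0P => [i _|]; first exact: sqr_ge0.
by apply/eqP; rewrite eq_le v0 sumr_ge0 // => i _; exact: sqr_ge0.
Qed.

Lemma pos_sqr_sum_le (s t : I -> R) : 0 <= \sum_i pos (s i) * (t i - s i) ->
  \sum_i pos (s i) ^+ 2 <= \sum_i pos (t i) ^+ 2.
Proof.
move=> var.
have st : \sum_i pos (s i) ^+ 2 <= \sum_i pos (s i) * pos (t i).
  apply: (@le_trans _ _ (\sum_i pos (s i) * t i)).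
    move: var; under eq_bigr do rewrite mulrBr.
    by rewrite sumrB subr_ge0; under eq_bigr do rewrite -pos_sqrE.
  by apply: ler_sum => i _; apply: ler_wpM2l; [exact: pos_ge0 | exact: ler_pos].
have amgm : \sum_i 2 * (pos (s i) * pos (t i)) <=
    \sum_i (pos (s i) ^+ 2 + pos (t i) ^+ 2).
  by apply: ler_sum => i _; have := sqr_ge0 (pos (s i) - pos (t i)); nra.
rewrite -mulr_sumr big_split /= in amgm; lra.
Qed.

End Norms.

Section InfeasibilityStationarity.
Variables (R : realType) (n m p : nat).
Variables (g : 'I_m -> 'rV[R]_n -> R) (h : 'I_p -> 'rV[R]_n -> R).

(* KKT conditions at [x] of  min ||g_+||^2 / 2  s.t.  h <= 0, with the
   multipliers [nu] supported on a set [J] of active constraints. *)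
Definition infeas_kkt (x : 'rV[R]_n) : Prop :=
  exists (J : {set 'I_p}) (nu : 'I_p -> R),
    [/\ forall j, j \in J -> h j x = 0, forall j, j \in J -> 0 <= nu j &
        forall i, \sum_(j in J) nu j * pd (h j) x i =
                  - \sum_j pos (g j x) * pd (g j) x i].

Lemma global_min_feasible (x y : 'rV[R]_n) :
  (forall z, (forall j, h j z <= 0) ->
     enorm (fun j => pos (g j x)) ^+ 2 <= enorm (fun j => pos (g j z)) ^+ 2) ->
  (forall j, g j y <= 0) -> (forall j, h j y <= 0) -> forall j, g j x <= 0.
Proof.
move=> xmin gy hy j; apply: le_trans (ler_pos (g j x)) _.
suff /enorm_sqr_le0/(_ j) -> : enorm (fun j => pos (g j x)) ^+ 2 <= 0 by [].
apply: le_trans (xmin y hy) _.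
by rewrite enorm_sqr big1 // => i _; rewrite ler0_pos // expr0n.
Qed.

Hypotheses (g_convex : forall j, convex_fun (g j))
           (h_convex : forall j, convex_fun (h j)).

Lemma infeas_kkt_variational (x y : 'rV[R]_n) :
  (forall j, differentiable (g j) x) -> (forall j, differentiable (h j) x) ->
  infeas_kkt x -> (forall j, h j y <= 0) ->
  0 <= \sum_j pos (g j x) * (g j y - g j x).
Proof.
move=> dg dh [J [nu [active nu0 stat]]] hy.
set d := fun i => y 0 i - x 0 i.
have lin_g : \sum_j pos (g j x) * (\sum_i d i * pd (g j) x i) <=
             \sum_j pos (g j x) * (g j y - g j x).
  apply: ler_sum => j _; apply: ler_wpM2l; first exact: pos_ge0.
  exact: convex_gradient_le.
have lin_h : \sum_(j in J) nu j * (\sum_i d i * pd (h j) x i) <= 0.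
  apply: (@le_trans _ _ (\sum_(j in J) nu j * (h j y - h j x))).
    apply: ler_sum => j jJ; apply: ler_wpM2l; first exact: nu0.
    exact: convex_gradient_le.
  rewrite -oppr_ge0 -sumrN; apply: sumr_ge0 => j jJ.
  by rewrite active // subr0 oppr_ge0 mulr_ge0_le0 // nu0.
have swap : \sum_j pos (g j x) * (\sum_i d i * pd (g j) x i) =
            - \sum_(j in J) nu j * (\sum_i d i * pd (h j) x i).
  under eq_bigr do rewrite mulr_sumr.
  under [in RHS]eq_bigr do rewrite mulr_sumr.
  rewrite exchange_big [in RHS]exchange_big /= -sumrN; apply: eq_bigr => i _.
  have -> : \sum_(j in J) nu j * (d i * pd (h j) x i) =
      d i * \sum_(j in J) nu j * pd (h j) x i.
    by rewrite mulr_sumr; apply: eq_bigr => j _; ring.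
  have -> : \sum_j pos (g j x) * (d i * pd (g j) x i) =
      d i * \sum_j pos (g j x) * pd (g j) x i.
    by rewrite mulr_sumr; apply: eq_bigr => j _; ring.
  by rewrite stat; ring.
lra.
Qed.

Lemma infeas_kkt_global_min (x : 'rV[R]_n) :
  (forall j, differentiable (g j) x) -> (forall j, differentiable (h j) x) ->
  infeas_kkt x -> forall y, (forall j, h j y <= 0) ->
  enorm (fun j => pos (g j x)) ^+ 2 <= enorm (fun j => pos (g j y)) ^+ 2.
Proof.
move=> dg dh kkt y hy; rewrite !enorm_sqr.
exact/pos_sqr_sum_le/infeas_kkt_variational.
Qed.

End InfeasibilityStationarity.

Section ConicCaratheodory.
Variables (R : realType) (K I : finType) (w : K -> I -> R).

Definition lin_indep (J : {set K}) : Prop :=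
  forall d : K -> R, (forall i, \sum_(j in J) d j * w j i = 0) ->
  forall j, j \in J -> d j = 0.

(* Move along a dependence [d'] with some positive coefficient until the first
   coefficient of [b] vanishes (ratio test). *)
Lemma conic_drop_dependent (A : {set K}) (b : K -> R) :
  (forall j, j \in A -> 0 <= b j) -> ~ lin_indep A ->
  exists k (b' : K -> R), [/\ k \in A, forall j, j \in A :\ k -> 0 <= b' j &
    forall i, \sum_(j in A :\ k) b' j * w j i = \sum_(j in A) b j * w j i].
Proof.
move=> b0 /existsNP [d /not_implyP [dw /existsNP [j0 /not_implyP [j0A /eqP dj0]]]].
have [d' [d'w [j1 j1A d'j1]]] : exists d' : K -> R,
    (forall i, \sum_(j in A) d' j * w j i = 0) /\ exists2 j1, j1 \in A & 0 < d' j1.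
  have [dpos|dneg] := ltP 0 (d j0); first by exists d; split => //; exists j0.
  exists (fun j => - d j); split.
    by move=> i; under eq_bigr do rewrite mulNr; rewrite sumrN dw oppr0.
  by exists j0 => //; rewrite oppr_gt0 lt_neqAle dneg andbT.
set P := fun j => (j \in A) && (0 < d' j).
have Pj1 : P j1 by rewrite /P j1A d'j1.
case: (@arg_minP _ _ _ j1 P (fun j => b j / d' j) Pj1) => k /andP [kA d'k] kmin.
set t := b k / d' k.
exists k, (fun j => b j - t * d' j); split => //.
- move=> j /setD1P [_ jA]; rewrite subr_ge0.
  have [d'j|d'j] := ltP 0 (d' j).
    by rewrite -ler_pdivlMr //; apply: kmin; rewrite /P jA d'j.
  apply: le_trans (b0 _ jA); apply: mulr_ge0_le0 => //.
  by apply: divr_ge0; [exact: b0 | exact: ltW].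
- move=> i; rewrite (big_setD1 k kA) /=.
  under eq_bigr do rewrite mulrBl -mulrA.
  rewrite sumrB -mulr_sumr.
  have -> : \sum_(j in A :\ k) d' j * w j i = - (d' k * w k i).
    by apply/eqP; rewrite -addr_eq0 addrC -(big_setD1 k kA) /= d'w.
  by rewrite mulrN opprK mulrA /t divfK ?gt_eqF // addrC.
Qed.

Lemma conic_caratheodory (A : {set K}) (b : K -> R) :
  (forall j, j \in A -> 0 <= b j) ->
  exists (J : {set K}) (b' : K -> R), [/\ J \subset A, forall j, j \in J -> 0 <= b' j,
    forall i, \sum_(j in J) b' j * w j i = \sum_(j in A) b j * w j i &
    lin_indep J].
Proof.
move: {2}#|A| (leqnn #|A|) => c; elim: c A b => [|c IH] A b Ac b0.
  exists A, b; split => // d _ j; move: Ac; rewrite leqn0 => /eqP /cards0_eq ->.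
  by rewrite inE.
have [indep|dep] := pselect (lin_indep A); first by exists A, b.
have [k [b2 [kA b20 sum2]]] := conic_drop_dependent b0 dep.
have [|J [b' [JA b'0 sum' indep]]] := IH (A :\ k) b2 _ b20.
  by move: Ac; rewrite (cardsD1 k A) kA add1n ltnS.
exists J, b'; split => //; first exact: fintype.subset_trans JA (subD1set A k).
by move=> i; rewrite sum' sum2.
Qed.

End ConicCaratheodory.

Section SequenceLimits.
Variable R : realType.

Lemma cvg_sum T (F : set_system T) {FF : Filter F} (I : finType) (P : pred I)
    (f : I -> T -> R) (l : I -> R) :
  (forall i, P i -> f i @ F --> l i) ->
  (\sum_(i | P i) f i t) @[t --> F] --> \sum_(i | P i) l i.
Proof. by move=> fl; apply: cvg_big => //; exact: add_continuous. Qed.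

Lemma cvgr_unique T (F : set_system T) {FF : ProperFilter F} (f : T -> R) (l l' : R) :
  f @ F --> l -> f @ F --> l' -> l = l'.
Proof. by move=> fl fl'; apply: (cvg_unique _ fl fl'). Qed.

Lemma norm_le_cvg0 T (F : set_system T) {FF : Filter F} (f g : T -> R) :
  (\forall t \near F, `|f t| <= g t) -> g @ F --> 0 -> f @ F --> 0.
Proof.
move=> fg /cvgr0Pnorm_le g0; apply/cvgr0Pnorm_le => e /g0.
by apply: filterS2 fg => t ft gt; apply: le_trans ft (le_trans (ler_norm _) gt).
Qed.

Lemma cvgr_le0_of_le_vanishing T (F : set_system T) {FF : ProperFilter F}
    (f e : T -> R) (l : R) :
  (\forall t \near F, f t <= e t) -> e @ F --> 0 -> f @ F --> l -> l <= 0.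
Proof.
move=> fe e0 fl; rewrite -(subr0 l).
apply: (closed_cvg _ (@closed_le _ 0) _ _ (cvgB fl e0)).
by apply: filterS fe => t /=; rewrite subr_le0.
Qed.

Lemma geometric_decay_cvg0 (c : nat -> R) (tau : R) (K : nat) :
  0 < tau < 1 -> (forall k, 0 <= c k) ->
  (forall k, (K <= k)%N -> c k.+1 <= tau * c k) -> c @ \oo --> 0.
Proof.
move=> /andP [tau0 tau1] c0 decay.
set C := c K / tau ^+ K.
have bound t : c (K + t)%N <= tau ^+ (K + t) * C.
  elim: t => [|t IH].
    by rewrite addn0 /C mulrCA mulfV ?mulr1 // expf_neq0 // gt_eqF.
  rewrite addnS; apply: le_trans (decay _ (leq_addr t K)) _.
  by rewrite exprS -mulrA ler_wpM2l // ltW.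
apply: (@squeeze_cvgr _ _ _ _ (fun=> 0) (fun k => tau ^+ k * C)).
- exists K => // k /= Kk; rewrite c0 /=.
  by have := bound (k - K)%N; rewrite subnKC.
- exact: cvg_cst.
- rewrite -(mul0r C); apply: cvgMr_tmp; apply: cvg_expr.
  by rewrite gtr0_norm.
Qed.

End SequenceLimits.

Section Ultrafilters.
Variables (T : Type) (U : set_system T).
Context {UU : UltraFilter U}.

Lemma ultra_pigeonhole (I : finType) (c : T -> I) :
  exists i, \forall t \near U, c t = i.
Proof.
apply: contrapT => /forallNP none.
have cvoid : forall i, \forall t \near U, c t <> i.
  move=> i; have [|//] := in_ultra_setVsetC [set t | c t = i] UU.
  by move=> ci; exfalso; exact: (none i).
by have [t /(_ (c t))] := filter_ex (filter_forall _ cvoid).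
Qed.

(* By compactness [f @ U] has a cluster point in [a, b], and a cluster point of
   an ultrafilter is a limit. *)
Lemma ultra_cvg_bounded (R : realType) (f : T -> R) (a b : R) :
  (\forall t \near U, a <= f t <= b) -> exists l : R, f t @[t --> U] --> l.
Proof.
move=> fab.
have fU : fmap f U `[a, b] by apply: filterS fab => t; rewrite /= in_itv.
have [l [_ cl]] := segment_compact (fmap_proper_filter f (@ultra_proper _ _ UU)) fU.
exists l => B Bl.
have [//|nB] := in_ultra_setVsetC (f @^-1` B) UU.
by have [z [nBz Bz]] := cl (~` B) B nB Bl.
Qed.

Lemma ultra_normalized_limits (R : realType) (I : finType) (J : {set I})
    (b : T -> I -> R) :
  (\forall t \near U, forall j, j \in J -> 0 <= b t j) ->
  exists (sig : R) (gam : I -> R),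
    [/\ (1 + \sum_(j in J) b t j)^-1 @[t --> U] --> sig,
        forall j, j \in J -> b t j / (1 + \sum_(j in J) b t j) @[t --> U] --> gam j,
        forall j, j \in J -> 0 <= gam j, 0 <= sig &
        \sum_(j in J) gam j = 1 - sig].
Proof.
move=> b0; set s := fun t => 1 + \sum_(j in J) b t j.
have s_ge : \forall t \near U, 1 <= s t /\ forall j, j \in J -> b t j <= s t.
  apply: filterS b0 => t b0; split; first by rewrite lerDl sumr_ge0.
  move=> j jJ; rewrite /s (bigD1 j) //= addrCA lerDl addr_ge0 //.
  by apply: sumr_ge0 => k /andP [kJ _]; exact: b0.
have [sig sig_lim] : exists sig : R, (s t)^-1 @[t --> U] --> sig.
  apply: (ultra_cvg_bounded (a := 0) (b := 1)); apply: filterS s_ge => t [s1 _].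
  by rewrite invr_ge0 invf_le1 ?s1 ?andbT //; lra.
have /choice [gam gam_lim] : forall j, exists l : R,
    j \in J -> b t j / s t @[t --> U] --> l.
  move=> j; case: (boolP (j \in J)) => jJ; last by exists 0.
  have [l bl] : exists l : R, b t j / s t @[t --> U] --> l.
    apply: (ultra_cvg_bounded (a := 0) (b := 1)).
    apply: filterS2 b0 s_ge => t b0 [s1 bs].
    rewrite divr_ge0 ?b0 //=; last by lra.
    by rewrite ler_pdivrMr ?mul1r ?bs //; lra.
  by exists l.
exists sig, gam; split => //.
- move=> j jJ; apply: (closed_cvg _ (@closed_ge _ 0) _ _ (gam_lim j jJ)).
  apply: filterS2 b0 s_ge => t b0 [s1 _] /=.
  by rewrite divr_ge0 ?b0 //; lra.
- apply: (closed_cvg _ (@closed_ge _ 0) _ _ sig_lim).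
  by apply: filterS s_ge => t [s1 _] /=; rewrite invr_ge0; lra.
- have sum_lim : (\sum_(j in J) b t j / s t) @[t --> U] --> 1 - sig.
    have sub_lim : (1 - (s t)^-1) @[t --> U] --> 1 - sig.
      by apply: cvgB => //; exact: cvg_cst.
    apply: cvg_trans sub_lim; apply: near_eq_cvg; apply: filterS s_ge => t [s1 _].
    have st0 : s t != 0 by rewrite gt_eqF //; lra.
    rewrite /= -mulr_suml (_ : \sum_(j in J) b t j = s t - 1); last by rewrite /s; lra.
    by rewrite mulrBl mulfV // mul1r.
  exact: cvgr_unique (cvg_sum gam_lim) sum_lim.
Qed.

End Ultrafilters.

(* [U] refines the image of [\oo] under [k |-> (phi k).-1], so that [x k.+1]
   runs along the subsequence. *)
Lemma subseq_ultrafilter (X : topologicalType) (x : nat -> X) (phi : nat -> nat)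
    (l : X) :
  (forall k, (phi k < phi k.+1)%N) -> x \o phi @ \oo --> l ->
  exists U : set_system nat, [/\ UltraFilter U, U --> \oo & x k.+1 @[k --> U] --> l].
Proof.
move=> phi_incr xl.
have phi_ge k : (k <= phi k)%N.
  by elim: k => // k IH; apply: leq_ltn_trans IH (phi_incr k).
have [U [UU sub]] := ultraFilterLemma
  (fmap_proper_filter (fun k => (phi k).-1) eventually_filter).
exists U; split => //.
  move=> A [K _ KA]; apply: sub; exists K.+1 => // k /= Kk; apply: KA => /=.
  by have := phi_ge k; lia.
move=> A /xl [K _ KA]; apply: sub; exists K.+1 => // k /= Kk.
by rewrite prednK; [apply: KA => /=; lia | have := phi_ge k; lia].
Qed.

Section CPLDLimits.
Variables (R : realType) (n p : nat) (h : 'I_p -> 'rV[R]_n -> R) (xbar : 'rV[R]_n).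
Hypotheses (pd_h_continuous : forall j i, continuous (fun y => pd (h j) y i))
           (cpld : CPLD h xbar).
Arguments pd_h_continuous : clear implicits.
Variables (T : Type) (U : set_system T) (y : T -> 'rV[R]_n).
Context {UU : UltraFilter U}.
Hypothesis y_cvg : y @ U --> xbar.

Let grad t := fun j i => pd (h j) (y t) i.

Lemma cvg_pd_h j i : pd (h j) (y t) i @[t --> U] --> pd (h j) xbar i.
Proof. exact: continuous_cvg _ (pd_h_continuous j i xbar) y_cvg. Qed.

Lemma cpld_pos_indep (J : {set 'I_p}) :
  (forall j, j \in J -> h j xbar = 0) ->
  (\forall t \near U, lin_indep (grad t) J) ->
  forall gam : 'I_p -> R, (forall j, j \in J -> 0 <= gam j) ->
  (forall i, \sum_(j in J) gam j * pd (h j) xbar i = 0) ->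
  forall j, j \in J -> gam j = 0.
Proof.
move=> active indep gam gam0 comb0 j jJ; apply: contrapT => /eqP gamj.
have /y_cvg dep := cpld active (ex_intro _ gam (conj gam0
  (conj (ex_intro2 _ _ j jJ gamj) comb0))).
have [t [indep_t [beta [[j1 j1J bj1] comb]]]] := filter_ex (filterI indep dep).
by move: bj1; rewrite (indep_t beta comb j1 j1J) eqxx.
Qed.

(* For [s = 1 + sum b], the limits [sig] of [1 / s] and [gam] of [b / s] satisfy
   [sum gam = 1 - sig] and [sum gam grad h = sig w]; CPLD rules out [sig = 0],
   and [gam / sig] are the multipliers. *)
Lemma cpld_bounded_limit (J : {set 'I_p}) (b : T -> 'I_p -> R) (w : 'I_n -> R) :
  (forall j, j \in J -> h j xbar = 0) ->
  (\forall t \near U, (forall j, j \in J -> 0 <= b t j) /\ lin_indep (grad t) J) ->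
  (forall i, (\sum_(j in J) b t j * pd (h j) (y t) i) @[t --> U] --> w i) ->
  exists2 nu : 'I_p -> R, (forall j, j \in J -> 0 <= nu j) &
    forall i, \sum_(j in J) nu j * pd (h j) xbar i = w i.
Proof.
move=> active near_b bw.
have [sig [gam [sig_lim gam_lim gam0 sig0 sum_gam]]] :=
  ultra_normalized_limits (filterS (fun t => @proj1 _ _) near_b).
have comb i : \sum_(j in J) gam j * pd (h j) xbar i = sig * w i.
  have lim_sw : (\sum_(j in J) b t j / (1 + \sum_(j in J) b t j) * pd (h j) (y t) i)
      @[t --> U] --> sig * w i.
    apply: cvg_trans (cvgM sig_lim (bw i)); apply: near_eq_cvg.
    apply: filterE => t; rewrite /= mulr_sumr; apply: eq_bigr => j _.
    by rewrite mulrCA mulrA.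
  apply: cvgr_unique lim_sw.
  by apply: cvg_sum => j jJ; apply: cvgM; [exact: gam_lim | exact: cvg_pd_h].
have sig_neq0 : sig != 0.
  apply/eqP => sig00.
  have gam00 := cpld_pos_indep active (filterS (fun t => @proj2 _ _) near_b) gam0.
  move: sum_gam; rewrite big1 => [|j jJ]; last first.
    by apply: gam00 jJ => i; rewrite comb sig00 mul0r.
  by rewrite sig00 subr0 => /eqP; rewrite eq_sym oner_eq0.
exists (fun j => gam j / sig); first by move=> j jJ; rewrite divr_ge0 ?gam0.
move=> i; rewrite -[w i](mulKf sig_neq0) -(comb i) mulr_sumr.
by apply: eq_bigr => j _; rewrite mulrAC mulrC.
Qed.

Lemma cpld_cone_limit (A : {set 'I_p}) (a : T -> 'I_p -> R) (w : 'I_n -> R) :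
  (forall j, j \in A -> h j xbar = 0) -> (forall t j, j \in A -> 0 <= a t j) ->
  (forall i, (\sum_(j in A) a t j * pd (h j) (y t) i) @[t --> U] --> w i) ->
  exists (J : {set 'I_p}) (nu : 'I_p -> R),
    [/\ forall j, j \in J -> h j xbar = 0, forall j, j \in J -> 0 <= nu j &
        forall i, \sum_(j in J) nu j * pd (h j) xbar i = w i].
Proof.
move=> active a0 aw.
have /choice [Jb Jb_spec] : forall t, exists Jb : {set 'I_p} * ('I_p -> R),
    [/\ Jb.1 \subset A, forall j, j \in Jb.1 -> 0 <= Jb.2 j,
     forall i, \sum_(j in Jb.1) Jb.2 j * pd (h j) (y t) i =
               \sum_(j in A) a t j * pd (h j) (y t) i &
     lin_indep (grad t) Jb.1].
  move=> t; have [J [b' spec]] := conic_caratheodory (grad t) (a0 t).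
  by exists (J, b').
have [J JE] := ultra_pigeonhole (fun t => (Jb t).1).
have activeJ j : j \in J -> h j xbar = 0.
  have [t Jt] := filter_ex JE; have [JA _ _ _] := Jb_spec t.
  by move=> jJ; apply: active; apply: (fintype.subsetP JA); rewrite Jt.
have near_b : \forall t \near U,
    (forall j, j \in J -> 0 <= (Jb t).2 j) /\ lin_indep (grad t) J.
  by apply: filterS JE => t Jt; have [_ b0 _ ind] := Jb_spec t; rewrite -Jt.
have bw i : (\sum_(j in J) (Jb t).2 j * pd (h j) (y t) i) @[t --> U] --> w i.
  apply: cvg_trans (aw i); apply: near_eq_cvg.
  by apply: filterS JE => t Jt; have [_ _ E _] := Jb_spec t; rewrite -Jt E.
have [nu nu0 nu_comb] := cpld_bounded_limit activeJ near_b bw.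
by exists J, nu.
Qed.

End CPLDLimits.

Lemma C1_differentiable (R : realType) n (f : 'rV[R]_n -> R) :
  C1 f -> forall x, differentiable f x.
Proof. by case. Qed.

Lemma C1_continuous (R : realType) n (f : 'rV[R]_n -> R) : C1 f -> continuous f.
Proof. by move=> f1 x; apply/differentiable_continuous/C1_differentiable. Qed.

Lemma C1_pd_continuous (R : realType) n (f : 'rV[R]_n -> R) i :
  C1 f -> continuous (fun y => pd f y i).
Proof. by case. Qed.

Record alm_run (R : realType) (N n m p : nat) (blk : 'I_n -> 'I_N)
    (theta : 'I_N -> 'rV[R]_n -> R) (g : 'I_m -> 'rV[R]_n -> R)
    (h : 'I_p -> 'rV[R]_n -> R) (umax tau gamma : R) (eps eps' : nat -> R)
    (x : nat -> 'rV[R]_n) (lam : nat -> 'I_m -> R) (mu : nat -> 'I_p -> R)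
    (u : nat -> 'I_m -> R) (rho : nat -> R) : Prop := AlmRun {
  umax_ge0 : 0 <= umax;
  tau_bounds : 0 < tau < 1;
  gamma_gt1 : 1 < gamma;
  rho0_gt0 : 0 < rho 0%N;
  u0_bounds : forall j, 0 <= u 0%N j <= umax;
  eps_bounded : exists M, forall k, eps k <= M;
  eps'_cvg0 : eps' @ \oo --> 0;
  inexact_stationarity : forall k nu,
    bnorm (fun i => blk i == nu)
      (fun i => pd (La (theta nu) g (u k) (rho k)) (x k.+1) i
                + \sum_j mu k.+1 j * pd (h j) (x k.+1) i) <= eps k;
  inexact_complementarity : forall k,
    enorm (fun j => Num.min (- h j (x k.+1)) (mu k.+1 j)) <= eps' k;
  lam_update : forall k j, lam k.+1 j = pos (u k j + rho k * g j (x k.+1));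
  rho_update : forall k, rho k.+1 =
    if enorm (fun j => Num.min (- g j (x k.+1)) (lam k.+1 j))
         <= tau * enorm (fun j => Num.min (- g j (x k)) (lam k j))
    then rho k else gamma * rho k;
  u_update : forall k j, u k.+1 j = Num.min (lam k.+1 j) umax
}.

Section AugmentedLagrangianIterates.
Variables (R : realType) (N n m p : nat) (blk : 'I_n -> 'I_N)
  (theta : 'I_N -> 'rV[R]_n -> R) (g : 'I_m -> 'rV[R]_n -> R)
  (h : 'I_p -> 'rV[R]_n -> R) (umax tau gamma : R) (eps eps' : nat -> R)
  (x : nat -> 'rV[R]_n) (lam : nat -> 'I_m -> R) (mu : nat -> 'I_p -> R)
  (u : nat -> 'I_m -> R) (rho : nat -> R).
Hypothesis run : alm_run blk theta g h umax tau gamma eps eps' x lam mu u rho.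

Lemma rho_gt0 k : 0 < rho k.
Proof.
elim: k => [|k IH]; first exact: rho0_gt0 run.
rewrite (rho_update run); case: ifP => // _; apply: mulr_gt0 => //.
by have := gamma_gt1 run; lra.
Qed.

Lemma rho_nondecreasing : nondecreasing_seq rho.
Proof.
apply/nondecreasing_seqP => k; rewrite (rho_update run); case: ifP => // _.
by rewrite ler_peMl ?(ltW (rho_gt0 k)) ?(ltW (gamma_gt1 run)).
Qed.

Lemma u_bounds k j : 0 <= u k j <= umax.
Proof.
case: k => [|k]; first exact: u0_bounds run j.
rewrite (u_update run) le_min ge_min lexx orbT andbT (umax_ge0 run) andbT.
by rewrite (lam_update run) pos_ge0.
Qed.

Lemma compl_residual_le k j : `|Num.min (- h j (x k.+1)) (mu k.+1 j)| <= eps' k.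
Proof. exact: le_trans (enorm_ge_norm _ j) (inexact_complementarity run k). Qed.

Lemma eps'_ge0 k : 0 <= eps' k.
Proof. exact: le_trans (enorm_ge0 _) (inexact_complementarity run k). Qed.

Lemma h_iterate_le k j : h j (x k.+1) <= eps' k.
Proof.
have := compl_residual_le k j; rewrite ler_norml le_min => /andP [/andP [? _] _].
lra.
Qed.

Lemma mu_iterate_ge k j : - eps' k <= mu k.+1 j.
Proof.
by have := compl_residual_le k j; rewrite ler_norml le_min => /andP [/andP [_ ?] _].
Qed.

Lemma mu_iterate_inactive k j : eps' k < - h j (x k.+1) -> `|mu k.+1 j| <= eps' k.
Proof.
move=> large; have := compl_residual_le k j.
have [_|//] := leP (- h j (x k.+1)) (mu k.+1 j).
by move=> hb; have := ler_norm (- h j (x k.+1)); lra.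
Qed.

Lemma scaled_stationarity k i :
  differentiable (theta (blk i)) (x k.+1) -> (forall j, differentiable (g j) (x k.+1)) ->
  `|pd (theta (blk i)) (x k.+1) i / rho k
    + \sum_j pos (g j (x k.+1) + u k j / rho k) * pd (g j) (x k.+1) i
    + \sum_j mu k.+1 j / rho k * pd (h j) (x k.+1) i| <= eps k / rho k.
Proof.
move=> dth dg; have rk := rho_gt0 k.
have := le_trans (@bnorm_ge_norm _ _ (fun i' => blk i' == blk i) _ i (eqxx _))
  (inexact_stationarity run k (blk i)).
rewrite /= pd_La // => stat.
have -> : pd (theta (blk i)) (x k.+1) i / rho k
    + \sum_j pos (g j (x k.+1) + u k j / rho k) * pd (g j) (x k.+1) i
    + \sum_j mu k.+1 j / rho k * pd (h j) (x k.+1) i =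
    (pd (theta (blk i)) (x k.+1) i
     + rho k * \sum_j pos (g j (x k.+1) + u k j / rho k) * pd (g j) (x k.+1) i
     + \sum_j mu k.+1 j * pd (h j) (x k.+1) i) / rho k.
  rewrite !mulrDl mulr_suml [rho k * _]mulrC mulfK ?gt_eqF //; congr (_ + _).
  by apply: eq_bigr => j _; rewrite mulrAC.
rewrite normrM normfV (gtr0_norm rk) ler_pM2r ?invr_gt0 //.
Qed.

Definition rho_stable : Prop := exists K, forall k, (K <= k)%N -> rho k.+1 = rho k.

Lemma compl_cvg0_of_stable : rho_stable ->
  enorm (fun j => Num.min (- g j (x k)) (lam k j)) @[k --> \oo] --> 0.
Proof.
move=> [K stable]; apply: (geometric_decay_cvg0 (K := K) (tau_bounds run)) => [k|k Kk].
  exact: enorm_ge0.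
have := rho_update run k; rewrite (stable k Kk); case: ifP => [//|_ E].
by exfalso; have := rho_gt0 k; have := gamma_gt1 run; nra.
Qed.

Lemma rho_geometric_growth : ~ rho_stable ->
  forall t, exists k, gamma ^+ t * rho 0%N <= rho k.
Proof.
move=> unstable; elim=> [|t [k grow]]; first by exists 0%N; rewrite mul1r.
have [k' [kk' jump]] : exists k', (k <= k')%N /\ rho k'.+1 <> rho k'.
  apply: contrapT => none; apply: unstable; exists k => k' kk'.
  by apply: contrapT => jump; apply: none; exists k'.
exists k'.+1; move: (rho_update run k'); case: ifP => [_ /jump [] | _ ->].
rewrite exprS -mulrA; apply: ler_wpM2l; first by have := gamma_gt1 run; lra.
exact: le_trans grow (rho_nondecreasing kk').
Qed.

Lemma inv_rho_cvg0 : ~ rho_stable -> (rho k)^-1 @[k --> \oo] --> 0.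
Proof.
move=> unstable; apply/cvgr0Pnorm_le => e e0.
have g1 := gamma_gt1 run; have r0 := rho0_gt0 run.
have gV0 : 0 < gamma^-1 by rewrite invr_gt0; lra.
have : (gamma^-1) ^+ t @[t --> \oo] --> 0.
  by apply: cvg_expr; rewrite gtr0_norm // invf_lt1 //; lra.
move=> /cvgr0_norm_le /(_ (e * rho 0%N) (mulr_gt0 e0 r0)) [t _ small].
have [k0 grow] := rho_geometric_growth unstable t.
exists k0 => // k /= k0k; rewrite gtr0_norm ?invr_gt0 ?rho_gt0 //.
have gt0 : 0 < gamma ^+ t * rho 0%N by rewrite mulr_gt0 // exprn_gt0 //; lra.
apply: (@le_trans _ _ ((gamma ^+ t * rho 0%N)^-1)).
  by rewrite lef_pV2 ?posrE ?rho_gt0 // (le_trans grow (rho_nondecreasing k0k)).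
rewrite invfM -exprVn ler_pdivrMr //.
by move: (small t (leqnn t)); rewrite /= gtr0_norm ?exprn_gt0.
Qed.

Hypotheses (theta_C1 : forall nu, C1 (theta nu)) (g_C1 : forall j, C1 (g j))
           (h_C1 : forall j, C1 (h j)).
Arguments theta_C1 : clear implicits.
Arguments g_C1 : clear implicits.

Variables (U : set_system nat) (xbar : 'rV[R]_n).
Context {UU : UltraFilter U}.
Hypotheses (U_tail : U --> \oo) (x_cvg : x k.+1 @[k --> U] --> xbar).

Lemma cvg_oo_U (s : nat -> R) (l : R) :
  s k @[k --> \oo] --> l -> s k @[k --> U] --> l.
Proof. by move=> sl; apply: cvg_trans sl; exact: cvg_app. Qed.

Lemma cvg_iterate_continuous (f : 'rV[R]_n -> R) :
  continuous f -> f (x k.+1) @[k --> U] --> f xbar.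
Proof. by move=> cf; exact: continuous_cvg _ (cf xbar) x_cvg. Qed.

Lemma cvg_iterate (f : 'rV[R]_n -> R) : C1 f -> f (x k.+1) @[k --> U] --> f xbar.
Proof. by move=> f1; apply/cvg_iterate_continuous/C1_continuous. Qed.

Lemma cvg_iterate_pd (f : 'rV[R]_n -> R) i :
  C1 f -> pd f (x k.+1) i @[k --> U] --> pd f xbar i.
Proof. by move=> f1; apply: (cvg_iterate_continuous (C1_pd_continuous (i := i) f1)). Qed.

Lemma limit_h_le0 j : h j xbar <= 0.
Proof.
apply: (cvgr_le0_of_le_vanishing (F := U) (e := eps')); last exact: cvg_iterate.
  by apply: filterE => k; exact: h_iterate_le.
exact/cvg_oo_U/(eps'_cvg0 run).
Qed.

Lemma limit_g_le0_of_stable : rho_stable -> forall j, g j xbar <= 0.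
Proof.
move=> stable j.
set c := fun k => enorm (fun j => Num.min (- g j (x k)) (lam k j)).
apply: (cvgr_le0_of_le_vanishing (F := U) (e := fun k => c k.+1));
  last exact: cvg_iterate.
  apply: filterE => k.
  have := enorm_ge_norm (fun j => Num.min (- g j (x k.+1)) (lam k.+1 j)) j.
  by rewrite ler_norml le_min => /andP [/andP [gc _] _]; rewrite /c; lra.
by apply: cvg_oo_U; rewrite (cvg_shiftS c); exact: compl_cvg0_of_stable.
Qed.

Lemma scaled_multipliers_cvg : ~ rho_stable -> forall i,
  (\sum_j mu k.+1 j / rho k * pd (h j) (x k.+1) i) @[k --> U] -->
  - \sum_j pos (g j xbar) * pd (g j) xbar i.
Proof.
move=> unstable i; have inv0 := cvg_oo_U (inv_rho_cvg0 unstable).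
have [M epsM] := eps_bounded run.
have resid0 : (pd (theta (blk i)) (x k.+1) i / rho k
    + \sum_j pos (g j (x k.+1) + u k j / rho k) * pd (g j) (x k.+1) i
    + \sum_j mu k.+1 j / rho k * pd (h j) (x k.+1) i) @[k --> U] --> 0.
  apply: (norm_le_cvg0 (g := fun k => M * (rho k)^-1)).
    apply: filterE => k; apply: le_trans (scaled_stationarity
      (C1_differentiable (theta_C1 (blk i)) _) (fun j => C1_differentiable (g_C1 j) _)) _.
    by rewrite ler_pM2r ?invr_gt0 ?rho_gt0 ?epsM.
  by rewrite -(mulr0 M); apply: cvgMl_tmp.
have theta0 : (pd (theta (blk i)) (x k.+1) i / rho k) @[k --> U] --> 0.
  rewrite -(mulr0 (pd (theta (blk i)) xbar i)); apply: cvgM => //.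
  exact: cvg_iterate_pd.
have u0 j : (u k j / rho k) @[k --> U] --> 0.
  apply: (norm_le_cvg0 (g := fun k => umax * (rho k)^-1)); last first.
    by rewrite -(mulr0 umax); apply: cvgMl_tmp.
  apply: filterE => k; have /andP [u0 u1] := u_bounds k j.
  have ri : 0 < (rho k)^-1 by rewrite invr_gt0 rho_gt0.
  by rewrite normrM (ger0_norm u0) (gtr0_norm ri) ler_pM2r.
have gpart : (\sum_j pos (g j (x k.+1) + u k j / rho k) * pd (g j) (x k.+1) i)
    @[k --> U] --> \sum_j pos (g j xbar) * pd (g j) xbar i.
  apply: cvg_sum => j _; apply: cvgM; last exact: cvg_iterate_pd.
  apply: cvg_pos; rewrite -[g j xbar]addr0; apply: cvgD; last exact: u0.
  exact: cvg_iterate.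
have lim : (pd (theta (blk i)) (x k.+1) i / rho k
    + \sum_j pos (g j (x k.+1) + u k j / rho k) * pd (g j) (x k.+1) i
    + \sum_j mu k.+1 j / rho k * pd (h j) (x k.+1) i
    - pd (theta (blk i)) (x k.+1) i / rho k
    - \sum_j pos (g j (x k.+1) + u k j / rho k) * pd (g j) (x k.+1) i)
    @[k --> U] --> 0 - 0 - \sum_j pos (g j xbar) * pd (g j) xbar i.
  by apply: cvgB => //; apply: cvgB.
rewrite subr0 sub0r in lim; apply: cvg_trans lim; apply: near_eq_cvg.
by apply: filterE => k /=; ring.
Qed.

Lemma inactive_multipliers_cvg0 : ~ rho_stable -> forall j,
  (mu k.+1 j / rho k - (if h j xbar == 0 then pos (mu k.+1 j / rho k) else 0))
    @[k --> U] --> 0.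
Proof.
move=> unstable j.
have eps'_rho : (eps' k / rho k) @[k --> U] --> 0.
  rewrite -(mul0r 0); apply: cvgM; first exact/cvg_oo_U/(eps'_cvg0 run).
  exact/cvg_oo_U/inv_rho_cvg0.
have ri k : 0 < (rho k)^-1 by rewrite invr_gt0 rho_gt0.
have [_|inactive] := eqVneq (h j xbar) 0.
  apply: (norm_le_cvg0 _ eps'_rho); apply: filterE => k.
  have [m0|m0] := leP 0 (mu k.+1 j / rho k).
    by rewrite ger0_pos // subrr normr0 mulr_ge0 ?eps'_ge0 // ltW.
  rewrite ler0_pos; last exact: ltW.
  rewrite subr0 ltr0_norm // -mulNr ler_pM2r //.
  by rewrite lerNl mu_iterate_ge.
apply: (norm_le_cvg0 _ eps'_rho).
have hneg : h j xbar < 0 by rewrite lt_neqAle inactive limit_h_le0.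
have near_h : \forall k \near U, h j (x k.+1) < h j xbar / 2.
  by apply: (cvgr_lt (h j xbar)); [exact: cvg_iterate | lra].
have near_eps : \forall k \near U, eps' k < - h j xbar / 2.
  by apply: (cvgr_lt 0); [exact/cvg_oo_U/(eps'_cvg0 run) | lra].
apply: filterS2 near_h near_eps => k hk ek /=.
rewrite subr0 normrM (gtr0_norm (ri k)) ler_pM2r //.
by apply: mu_iterate_inactive; lra.
Qed.

Lemma limit_infeas_kkt : CPLD h xbar -> infeas_kkt g h xbar.
Proof.
move=> cpld; have [stable|unstable] := pselect rho_stable.
  exists finset.set0, (fun=> 0); split=> [j|j|i]; rewrite ?inE //.
  rewrite big_set0 big1 ?oppr0 // => j _.
  by rewrite ler0_pos ?mul0r ?limit_g_le0_of_stable.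
rewrite /infeas_kkt; set A := [set j | h j xbar == 0]%SET.
apply: (cpld_cone_limit _ cpld x_cvg (A := A)
         (a := fun k j => pos (mu k.+1 j / rho k))).
- by move=> j i; exact/C1_pd_continuous.
- by move=> j; rewrite inE => /eqP.
- by move=> k j _; exact: pos_ge0.
move=> i.
have lim : (\sum_j mu k.+1 j / rho k * pd (h j) (x k.+1) i
    - \sum_j (mu k.+1 j / rho k
              - (if h j xbar == 0 then pos (mu k.+1 j / rho k) else 0))
             * pd (h j) (x k.+1) i)
    @[k --> U] --> - \sum_j pos (g j xbar) * pd (g j) xbar i
                   - \sum_j 0 * pd (h j) xbar i.
  apply: cvgB; first exact: scaled_multipliers_cvg.
  apply: cvg_sum => j _; apply: cvgM; first exact: inactive_multipliers_cvg0.
  exact: cvg_iterate_pd.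
have zero : \sum_(j < p) 0 * pd (h j) xbar i = 0.
  by rewrite big1 // => j _; rewrite mul0r.
rewrite zero subr0 in lim.
apply: cvg_trans lim; apply: near_eq_cvg; apply: filterE => k /=.
rewrite -sumrB [RHS]big_mkcond /=; apply: eq_bigr => j _; rewrite inE.
by case: ifP => _; ring.
Qed.

End AugmentedLagrangianIterates.

Theorem theorem5p3
  (R : realType) (N n m p : nat)
  (* blk i = the player nu owning coordinate i, i.e. x^nu = (x_i)_{blk i = nu} *)
  (blk : 'I_n -> 'I_N)
  (theta : 'I_N -> 'rV[R]_n -> R)
  (g : 'I_m -> 'rV[R]_n -> R) (h : 'I_p -> 'rV[R]_n -> R)
  (Htheta : forall nu, C1 (theta nu))
  (Hg : forall j, C1 (g j)) (Hh : forall j, C1 (h j))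
  (Hgc : forall j, convex_fun (g j)) (Hhc : forall j, convex_fun (h j))
  (* parameters *)
  (umax tau gamma : R) (eps eps' : nat -> R)
  (Humax : 0 <= umax) (Htau : 0 < tau < 1) (Hgamma : 1 < gamma)
  (* iterates *)
  (x : nat -> 'rV[R]_n) (lam : nat -> 'I_m -> R) (mu : nat -> 'I_p -> R)
  (u : nat -> 'I_m -> R) (rho : nat -> R)
  (Hrho0 : 0 < rho 0%N)
  (Hu0 : forall j, 0 <= u 0%N j <= umax)
  (* step (1): inexactness assumption *)
  (Heps_nn : forall k, 0 <= eps k) (Heps_bd : exists M, forall k, eps k <= M)
  (Heps'_nn : forall k, 0 <= eps' k) (Heps'_lim : eps' @ \oo --> 0)
  (Hinex1 : forall k nu,
     bnorm (fun i => blk i == nu)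
       (fun i => pd (La (theta nu) g (u k) (rho k)) (x k.+1) i
                 + \sum_j mu k.+1 j * pd (h j) (x k.+1) i) <= eps k)
  (Hinex2 : forall k,
     enorm (fun j => Num.min (- h j (x k.+1)) (mu k.+1 j)) <= eps' k)
  (* step (2) *)
  (Hlam : forall k j, lam k.+1 j = pos (u k j + rho k * g j (x k.+1)))
  (* step (3) *)
  (Hrho : forall k, rho k.+1 =
     if enorm (fun j => Num.min (- g j (x k.+1)) (lam k.+1 j))
          <= tau * enorm (fun j => Num.min (- g j (x k)) (lam k j))
     then rho k else gamma * rho k)
  (* step (4) *)
  (Hu : forall k j, u k.+1 j = Num.min (lam k.+1 j) umax)
  (* limit point and CPLD *)
  (xbar : 'rV[R]_n)
  (Hlim : exists phi : nat -> nat, (forall k, (phi k < phi k.+1)%N) /\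
            (x \o phi) @ \oo --> xbar)
  (Hcpld : CPLD h xbar) :
  ((forall j, h j xbar <= 0) /\
   (forall y : 'rV[R]_n, (forall j, h j y <= 0) ->
      enorm (fun j => pos (g j xbar)) ^+ 2 <= enorm (fun j => pos (g j y)) ^+ 2))
  /\
  ((exists y : 'rV[R]_n, (forall j, g j y <= 0) /\ (forall j, h j y <= 0)) ->
     (forall j, g j xbar <= 0) /\ (forall j, h j xbar <= 0)).
Proof.
have run : alm_run blk theta g h umax tau gamma eps eps' x lam mu u rho by [].
have [phi [phi_incr x_phi]] := Hlim.
have [U [UU U_tail x_U]] := subseq_ultrafilter phi_incr x_phi.
have h_le0 := limit_h_le0 run Hh (UU := UU) U_tail x_U.
have kkt := limit_infeas_kkt run Htheta Hg Hh (UU := UU) U_tail x_U Hcpld.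
have xbar_min := infeas_kkt_global_min Hgc Hhc
  (fun j => C1_differentiable (Hg j) xbar) (fun j => C1_differentiable (Hh j) xbar) kkt.
split=> // -[y [gy hy]]; split=> //.
exact: global_min_feasible xbar_min gy hy.
Qed.
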